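(* Let $I$ be an arbitrary index set. There exists a triple $(\mathcal X,\operatorname{tr},(X_i)_{i\in I})$, where $\mathcal X$ is a unital complex algebra, $\operatorname{tr}$ is a center-valued expectation on $\mathcal X$ and $X_i\in\mathcal X$, which possesses the universal property for $I$ (defined in the context). It is unique in the sense that any two such triples are related by a unique $I$-adapted isomorphism; it is denoted $(\mathbb{C}\{X_i:i\in I\},\operatorname{tr},(X_i)_{i\in I})$. The unital homomorphism $\mathbb{C}\langle X_i:i\in I\rangle\to\mathcal X$ sending $X_i\mapsto X_i$ is injective, and, viewing $\mathbb{C}\langle X_i:i\in I\rangle$ as a subalgebra, the set $$\{M_0\operatorname{tr}(M_1)\cdots\operatorname{tr}(M_n):\ n\in\mathbb N,\ M_0,\dots,M_n \text{ monomials of } \mathbb{C}\langle X_i:i\in I\rangle\}$$ (considered as a set of elements of $\mathcal X$, so coinciding elements are counted once) is a basis of $\mathcal X$.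
   Context: $\mathbb{C}\langle X_i:i\in I\rangle$ is the free unital algebra on non-commuting indeterminates $(X_i)_{i\in I}$; monomials include the empty monomial $1$. For a unital complex algebra $\mathcal A$ with center $Z_{\mathcal A}$, a center-valued expectation is a linear map $\tau:\mathcal A\to Z_{\mathcal A}$ such that $\tau(\tau(A)B)=\tau(A)\tau(B)$ for all $A,B\in\mathcal A$ and $\tau(1_{\mathcal A})=1_{\mathcal A}$. A triple $(\mathcal X,\operatorname{tr},(X_i)_{i\in I})$ ($\mathcal X$ a unital algebra, $\operatorname{tr}$ a center-valued expectation on it, $X_i\in\mathcal X$) has the universal property for $I$ if for every unital complex algebra $\mathcal A$ with a center-valued expectation $\tau$ and every family $(A_i)_{i\in I}$ of elements of $\mathcal A$ there is a unique unital algebra homomorphism $f:\mathcal X\to\mathcal A$ with $f(X_i)=A_i$ for all $i$ and $\tau(f(X))=f(\operatorname{tr}(X))$ for all $X\in\mathcal X$. Such an $f$ is called an $I$-adapted homomorphism; a bijective one is an $I$-adapted isomorphism. *)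

From HB Require Import structures.
From Stdlib Require Import Reals Lra Psatz ClassicalEpsilon FunctionalExtensionality.
From mathcomp Require Import all_boot all_order all_algebra.

Set Implicit Arguments.
Unset Strict Implicit.
Unset Printing Implicit Defensive.

Import GRing.Theory.

Record complex := Cmk { Re : R; Im : R }.

Definition classic_eqb (T : Type) (x y : T) : bool :=
  if excluded_middle_informative (x = y) then true else false.

Lemma classic_eqP (T : Type) : Equality.axiom (@classic_eqb T).
Proof.
move=> x y; rewrite /classic_eqb.
case: (excluded_middle_informative (x = y)) => h; [exact: ReflectT | exact: ReflectF].
Qed.

HB.instance Definition _ := hasDecEq.Build complex (@classic_eqP complex).

Definition classic_find (T : Type) (P : pred T) (n : nat) : option T :=
  match excluded_middle_informative (exists x, P x) with
  | left h => Some (proj1_sig (constructive_indefinite_description _ h))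
  | right _ => None
  end.

Lemma classic_find_correct (T : Type) (P : pred T) n x :
  classic_find P n = Some x -> P x.
Proof.
rewrite /classic_find; case: excluded_middle_informative => // h [<-].
exact: proj2_sig (constructive_indefinite_description _ h).
Qed.

Lemma classic_find_complete (T : Type) (P : pred T) :
  (exists x, P x) -> exists n, classic_find P n.
Proof.
move=> h; exists 0%N; rewrite /classic_find.
by case: excluded_middle_informative.
Qed.

Lemma classic_find_ext (T : Type) (P Q : pred T) :
  P =1 Q -> classic_find P =1 classic_find Q.
Proof.
move=> h; have -> : P = Q by apply: functional_extensionality.
by [].
Qed.

HB.instance Definition _ := hasChoice.Build complex
  (@classic_find_correct complex) (@classic_find_complete complex)
  (@classic_find_ext complex).

Definition C0 : complex := Cmk R0 R0.
Definition C1 : complex := Cmk R1 R0.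
Definition Cadd (z w : complex) : complex :=
  Cmk (Rplus (Re z) (Re w)) (Rplus (Im z) (Im w)).
Definition Copp (z : complex) : complex := Cmk (Ropp (Re z)) (Ropp (Im z)).
Definition Cmul (z w : complex) : complex :=
  Cmk (Rminus (Rmult (Re z) (Re w)) (Rmult (Im z) (Im w)))
      (Rplus (Rmult (Re z) (Im w)) (Rmult (Im z) (Re w))).
Definition Cnorm2 (z : complex) : R := Rplus (Rmult (Re z) (Re z)) (Rmult (Im z) (Im z)).
Definition Cinv (z : complex) : complex :=
  Cmk (Rdiv (Re z) (Cnorm2 z)) (Rdiv (Ropp (Im z)) (Cnorm2 z)).

Lemma Cadd_assoc : associative Cadd.
Proof. by move=> [a b] [c d] [e f]; rewrite /Cadd /=; f_equal; ring. Qed.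
Lemma Cadd_comm : commutative Cadd.
Proof. by move=> [a b] [c d]; rewrite /Cadd /=; f_equal; ring. Qed.
Lemma Cadd0 : left_id C0 Cadd.
Proof. by move=> [a b]; rewrite /Cadd /=; f_equal; ring. Qed.
Lemma CaddN : left_inverse C0 Copp Cadd.
Proof. by move=> [a b]; rewrite /Cadd /C0 /=; f_equal; ring. Qed.

HB.instance Definition _ := GRing.isZmodule.Build complex
  Cadd_assoc Cadd_comm Cadd0 CaddN.

Lemma Cmul_assoc : associative Cmul.
Proof. by move=> [a b] [c d] [e f]; rewrite /Cmul /=; f_equal; ring. Qed.
Lemma Cmul_comm : commutative Cmul.
Proof. by move=> [a b] [c d]; rewrite /Cmul /=; f_equal; ring. Qed.
Lemma Cmul1 : left_id C1 Cmul.
Proof. by move=> [a b]; rewrite /Cmul /=; f_equal; ring. Qed.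
Lemma Cmul_addl : left_distributive Cmul Cadd.
Proof. by move=> [a b] [c d] [e f]; rewrite /Cmul /Cadd /=; f_equal; ring. Qed.
Lemma C1_neq0 : C1 != C0.
Proof.
apply/eqP => -[h]; exact: R1_neq_R0 h.
Qed.

HB.instance Definition _ := GRing.Zmodule_isComNzRing.Build complex
  Cmul_assoc Cmul_comm Cmul1 Cmul_addl C1_neq0.

Lemma CmulV (z : complex) : z != 0%R -> (Cinv z * z)%R = 1%R.
Proof.
case: z => a b /eqP hz.
have hn : Cnorm2 (Cmk a b) <> R0.
  rewrite /Cnorm2 /= => h; apply: hz.
  have ha : a = R0 by nra.
  have hb : b = R0 by nra.
  by rewrite ha hb.
change (Cmul (Cinv (Cmk a b)) (Cmk a b) = C1).
move: hn; rewrite /Cmul /Cinv /C1 /Cnorm2 /= => hn.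
f_equal; field; exact: hn.
Qed.

Lemma Cinv0 : Cinv 0%R = 0%R.
Proof.
rewrite /Cinv /Cnorm2 /=.
have -> : Rplus (Rmult R0 R0) (Rmult R0 R0) = R0 by ring.
by rewrite /Rdiv Rinv_0 !Rmult_0_r.
Qed.

HB.instance Definition _ := GRing.ComNzRing_isField.Build complex CmulV Cinv0.

Local Open Scope ring_scope.

Definition unital_alg_hom (A B : algType complex) (f : A -> B) : Prop :=
  linear f /\ monoid_morphism f.

Definition center_valued_expectation (A : algType complex) (tau : A -> A) : Prop :=
  [/\ linear tau,
      (forall a b : A, tau a * b = b * tau a),
      (forall a b : A, tau (tau a * b) = tau a * tau b)
    & tau 1 = 1].

Definition adapted_hom (I : Type) (X : algType complex) (tr : X -> X) (x : I -> X)
    (A : algType complex) (tau : A -> A) (a : I -> A) (f : X -> A) : Prop :=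
  [/\ unital_alg_hom f, (forall i, f (x i) = a i)
    & (forall y : X, tau (f y) = f (tr y))].

Definition universal_property (I : Type) (X : algType complex) (tr : X -> X)
    (x : I -> X) : Prop :=
  forall (A : algType complex) (tau : A -> A),
    center_valued_expectation tau ->
    forall a : I -> A, exists! f : X -> A, adapted_hom tr x tau a f.

(* (F, y) is a free unital complex algebra on the generators (y_i)_{i in I},
   i.e. a model of C<X_i : i in I> *)
Definition free_unital_algebra (I : Type) (F : algType complex) (y : I -> F) : Prop :=
  forall (A : algType complex) (a : I -> A),
    exists! g : F -> A, unital_alg_hom g /\ (forall i, g (y i) = a i).

Definition monomial (I : Type) (X : algType complex) (x : I -> X) (w : seq I) : X :=
  \prod_(i <- w) x i.

Definition lin_indep (V : lmodType complex) (S : V -> Prop) : Prop :=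
  forall (s : seq V) (c : V -> complex),
    uniq s -> (forall v, v \in s -> S v) ->
    \sum_(v <- s) c v *: v = 0 -> forall v, v \in s -> c v = 0.

Definition spans (V : lmodType complex) (S : V -> Prop) : Prop :=
  forall z : V, exists s : seq (complex * V),
    (forall p, p \in s -> S p.2) /\ z = \sum_(p <- s) p.1 *: p.2.

Definition is_basis (V : lmodType complex) (S : V -> Prop) : Prop :=
  lin_indep S /\ spans S.

Definition trace_monomials (I : Type) (X : algType complex) (tr : X -> X)
    (x : I -> X) : X -> Prop :=
  fun z => exists (M0 : seq I) (Ms : seq (seq I)),
    z = monomial x M0 * \prod_(M <- Ms) tr (monomial x M).

(* Let W be the free monoid on I (words M) and T the free commutative
   monoid on the formal traces tr(w) of nonempty words w.  In the monoid
   algebra X = C[W x T] put tr(M t) = tr(M) t (with tr(1) = 1), extended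
   linearly: it is a center-valued expectation, and the basis vectors M t are
   exactly the elements M0 tr(M1) ... tr(Mn).

   For (A, tau, a), send M t to a(M) times the product of
   the tau(a(w)) over the tr(w) in t.  These factors live in the commutative
   monoid of tau-scalars (central z with tau(b z) = tau(b) z), which makes the
   map multiplicative and compatible with the traces.  It is unique because X
   is generated by the X_i under products and tr.

   Universal triples are isomorphic by the usual argument; the
   isomorphism with the model carries its monomial basis onto the trace
   monomials of any universal triple; and the free algebra C<X_i> embeds, since
   the model retracts onto it by killing T. *)

From HB Require Import structures.
From Stdlib Require Import ClassicalEpsilon FunctionalExtensionality ProofIrrelevance.
From mathcomp Require Import all_boot all_order all_algebra.
From mathcomp Require Import finmap monalg.
Set Implicit Arguments.
Unset Strict Implicit.
Unset Printing Implicit Defensive.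
Import GRing.Theory.
Local Open Scope ring_scope.

Section LinearMaps.
Variables (U W : lmodType complex) (f : U -> W).
Hypothesis hf : linear f.

Lemma linD u v : f (u + v) = f u + f v.
Proof. by have := hf 1 u v; rewrite !scale1r. Qed.

Lemma lin0 : f 0 = 0.
Proof. by apply: (addrI (f 0)); rewrite addr0 -linD addr0. Qed.

Lemma linZ c u : f (c *: u) = c *: f u.
Proof. by have := hf c u 0; rewrite !addr0 lin0 addr0. Qed.

Lemma lin_sum (T : Type) (r : seq T) (P : pred T) (F : T -> U) :
  f (\sum_(i <- r | P i) F i) = \sum_(i <- r | P i) f (F i).
Proof. exact: (big_morph f linD lin0). Qed.
End LinearMaps.

Lemma lin_comp (U W Y : lmodType complex) (f : W -> Y) (g : U -> W) :
  linear f -> linear g -> linear (fun u => f (g u)).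
Proof. by move=> hf hg c u v; rewrite hg hf. Qed.

Lemma lin_mull (A : algType complex) (c : A) : linear (fun b : A => c * b).
Proof. by move=> s u v; rewrite mulrDr scalerAr. Qed.

Lemma lin_mulr (A : algType complex) (c : A) : linear (fun b : A => b * c).
Proof. by move=> s u v; rewrite mulrDl scalerAl. Qed.

Definition mprod (M N : monomType) : Type := (M * N)%type.
HB.instance Definition _ (M N : monomType) := Choice.on (mprod M N).

Section MonomialProduct.
Variables M N : monomType.
Implicit Types a b c : mprod M N.

Definition mprod_one : mprod M N := (mone, mone).
Definition mprod_mul a b : mprod M N := (mmul a.1 b.1, mmul a.2 b.2).

Lemma mprod_mulA : associative mprod_mul.
Proof. by move=> [a b] [c d] [e f]; rewrite /mprod_mul /= !mulmA. Qed.
Lemma mprod_mul1m : left_id mprod_one mprod_mul.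
Proof. by move=> [a b]; rewrite /mprod_mul /= !mul1m. Qed.
Lemma mprod_mulm1 : right_id mprod_one mprod_mul.
Proof. by move=> [a b]; rewrite /mprod_mul /= !mulm1. Qed.
Lemma mprod_unit a b : mprod_mul a b = mprod_one -> a = mprod_one /\ b = mprod_one.
Proof. by case: a b => [a1 a2] [b1 b2] [] /unitm [-> ->] /unitm [-> ->]. Qed.
End MonomialProduct.

HB.instance Definition _ (M N : monomType) := Choice_isMonomialDef.Build
  (mprod M N) (@mprod_mulA M N) (@mprod_mul1m M N) (@mprod_mulm1 M N)
  (@mprod_unit M N).

Lemma mprod_mulE (M N : monomType) (a b : mprod M N) :
  mmul a b = (mmul a.1 b.1, mmul a.2 b.2).
Proof. by []. Qed.

Lemma mprod_oneE (M N : monomType) : (mone : mprod M N) = (mone, mone).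
Proof. by []. Qed.

Definition calg (K : monomType) : Type := {malg complex[K]}.
HB.instance Definition _ (K : monomType) := GRing.Lalgebra.on (calg K).

Lemma calg_scalerAr (K : monomType) (c : complex) (g h : calg K) :
  c *: (g * h) = g * (c *: h).
Proof.
have comm : c%:MP * g = g * c%:MP.
  rewrite !malgM_def fgmulUg fgmulgU; apply: eq_bigr => k _.
  by rewrite mulrC mul1m mulm1.
by rewrite -!mul_malgC mulrA comm mulrA.
Qed.

HB.instance Definition _ (K : monomType) := GRing.Lalgebra_isAlgebra.Build
  complex (calg K) (@calg_scalerAr K).

Section MonoidAlgebra.
Variable K : monomType.
Implicit Types (g : calg K) (k : K).

(* The basis vector of C[K] attached to the monomial k (locked, so that it
   is not unfolded into its finitely supported function). *)
Fact basis_key : unit. Proof. exact: tt. Qed.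
Definition bs : K -> calg K := locked_with basis_key (fun k => << k >>).
Lemma bsE k : bs k = << k >>.
Proof. by rewrite /bs unlock. Qed.

Lemma calg1E : 1 = bs mone.
Proof. by rewrite bsE. Qed.

Lemma bs_mul k1 k2 : bs k1 * bs k2 = bs (mmul k1 k2).
Proof. by rewrite !bsE malgM_def fgmulUU mulr1. Qed.

Lemma calg_decomp g : g = \sum_(k <- msupp g) g@_k *: bs k.
Proof.
rewrite {1}(monalgE g); apply: eq_bigr => k _.
by rewrite bsE -mul_malgC malgM_def fgmulUU mulr1 mul1m.
Qed.

Lemma mcoeff_sum (T : Type) (r : seq T) (F : T -> calg K) k :
  (\sum_(i <- r) F i)@_k = \sum_(i <- r) (F i)@_k.
Proof.
elim: r => [|t r IH]; first by rewrite !big_nil mcoeff0.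
by rewrite !big_cons mcoeffD IH.
Qed.

Lemma mcoeff_bs k k' : (bs k)@_k' = (k == k')%:R.
Proof. by rewrite bsE mcoeffU1. Qed.

Lemma linear_basis_ext (A : lmodType complex) (f1 f2 : calg K -> A) :
  linear f1 -> linear f2 -> (forall k, f1 (bs k) = f2 (bs k)) -> f1 =1 f2.
Proof.
move=> h1 h2 e g; rewrite (calg_decomp g) (lin_sum h1) (lin_sum h2).
by apply: eq_bigr => k _; rewrite (linZ h1) (linZ h2) e.
Qed.

Definition linext (A : lmodType complex) (H : K -> A) g : A :=
  \sum_(k <- msupp g) g@_k *: H k.

Section LinearExtension.
Variables (A : lmodType complex) (H : K -> A).

Lemma linextEw (d : {fset K}) g :
  (msupp g `<=` d)%fset -> linext H g = \sum_(k <- d) g@_k *: H k.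
Proof.
move=> le; rewrite /linext [LHS](big_fset_incl _ le) => //= x _ /mcoeff_outdom ->.
by rewrite scale0r.
Qed.

Lemma linext_lin : linear (linext H).
Proof.
move=> c g1 g2.
have s1 : (msupp g1 `<=` msupp (c *: g1 + g2) `|` msupp g1 `|` msupp g2)%fset.
  by rewrite -fsetUA fsubsetU // fsubsetUl orbT.
have s2 : (msupp g2 `<=` msupp (c *: g1 + g2) `|` msupp g1 `|` msupp g2)%fset.
  by rewrite fsubsetUr.
have s0 : (msupp (c *: g1 + g2) `<=` msupp (c *: g1 + g2) `|` msupp g1 `|` msupp g2)%fset.
  by rewrite -fsetUA fsubsetUl.
rewrite (linextEw s0) (linextEw s1) (linextEw s2) scaler_sumr -big_split /=.
by apply: eq_bigr => k _; rewrite mcoeffD mcoeffZ scalerDl scalerA.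
Qed.

Lemma linextB k : linext H (bs k) = H k.
Proof. by rewrite bsE (linextEw msuppU_le) big_seq_fset1 mcoeffUU scale1r. Qed.
End LinearExtension.

Lemma linext_hom (A : algType complex) (H : K -> A) :
  H mone = 1 -> (forall k1 k2, H (mmul k1 k2) = H k1 * H k2) ->
  unital_alg_hom (linext H).
Proof.
move=> H1 HM; have hl := linext_lin H; split=> //; split.
  by rewrite calg1E linextB.
move=> g1 g2; rewrite {1}(calg_decomp g1) {1}(calg_decomp g2) mulr_suml.
rewrite (lin_sum hl) mulr_suml; apply: eq_bigr => k1 _.
rewrite mulr_sumr (lin_sum hl) mulr_sumr; apply: eq_bigr => k2 _.
rewrite -scalerAl -scalerAr scalerA bs_mul (linZ hl) linextB HM.
by rewrite -scalerAl -scalerAr scalerA.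
Qed.

Lemma image_basis (W : lmodType complex) (phi : calg K -> W) (S : W -> Prop) :
  linear phi -> bijective phi ->
  (forall z, S z <-> exists k, z = phi (bs k)) -> is_basis S.
Proof.
move=> hphi [psi psiK phiK] hS; split.
- move=> s c us sS hsum.
  pose kf (v : W) : K :=
    match excluded_middle_informative (exists k, v = phi (bs k)) with
    | left h => proj1_sig (constructive_indefinite_description _ h)
    | right _ => mone end.
  have kfP v : S v -> v = phi (bs (kf v)).
    move=> /hS h; rewrite /kf; case: excluded_middle_informative => // h'.
    exact: (proj2_sig (constructive_indefinite_description _ h')).
  have e0 : \sum_(v <- s) c v *: bs (kf v) = 0.
    apply: (can_inj psiK); rewrite (lin0 hphi) (lin_sum hphi) -{2}hsum.
    apply: eq_big_seq => v vs; rewrite (linZ hphi) -kfP //; exact: sS.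
  move=> w ws; have := congr1 (mcoeff (kf w)) e0.
  rewrite mcoeff_sum mcoeff0 (eq_big_seq (fun v => c v * (v == w)%:R)); last first.
    move=> v vs; rewrite mcoeffZ mcoeff_bs; congr (_ * _%:R).
    congr (nat_of_bool _); apply/idP/idP => /eqP e; apply/eqP; last by rewrite e.
    by rewrite (kfP _ (sS _ vs)) (kfP _ (sS _ ws)) e.
  rewrite (bigD1_seq w) //= eqxx mulr1 big1 ?addr0 // => v /negbTE ->.
  by rewrite mulr0.
- move=> z; exists [seq ((psi z)@_k, phi (bs k)) | k <- msupp (psi z)]; split.
    by move=> p /mapP [k _ ->] /=; apply/hS; exists k.
  rewrite big_map -{1}(phiK z) {1}(calg_decomp (psi z)) (lin_sum hphi).
  by apply: eq_bigr => k _; rewrite (linZ hphi).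
Qed.
End MonoidAlgebra.

Section UnitalHom.
Variables (X A : algType complex) (f : X -> A).
Hypothesis hf : unital_alg_hom f.

Lemma uah_lin : linear f. Proof. by case: hf. Qed.
Lemma uah1 : f 1 = 1. Proof. by case: hf => _ []. Qed.
Lemma uahM u v : f (u * v) = f u * f v. Proof. by case: hf => _ [] _ ->. Qed.

Lemma uah_prod (T : Type) (r : seq T) (F : T -> X) :
  f (\prod_(i <- r) F i) = \prod_(i <- r) f (F i).
Proof. exact: (big_morph f uahM uah1). Qed.

Lemma uah_monomial (I : Type) (x : I -> X) (a : I -> A) (w : seq I) :
  (forall i, f (x i) = a i) -> f (monomial x w) = monomial a w.
Proof. by move=> e; rewrite /monomial uah_prod; apply: eq_bigr => i _; exact: e. Qed.
End UnitalHom.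

Lemma uah_id (X : algType complex) : unital_alg_hom (fun u : X => u).
Proof. by []. Qed.

Lemma uah_comp (X Y Z : algType complex) (f : X -> Y) (g : Y -> Z) :
  unital_alg_hom f -> unital_alg_hom g -> unital_alg_hom (fun u => g (f u)).
Proof.
move=> hf hg; split; first exact: lin_comp (uah_lin hg) (uah_lin hf).
by split=> [|u v]; rewrite ?(uah1 hf) ?(uah1 hg) // (uahM hf) (uahM hg).
Qed.

Section AdaptedHom.
Variable I : Type.

Lemma adapted_id (X : algType complex) (tr : X -> X) (x : I -> X) :
  adapted_hom tr x tr x (fun u => u).
Proof. by split; [exact: uah_id | |]. Qed.

Lemma adapted_comp (X Y Z : algType complex) (trX : X -> X) (trY : Y -> Y)
    (trZ : Z -> Z) (x : I -> X) (y : I -> Y) (z : I -> Z) (f : X -> Y) (g : Y -> Z) :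
  adapted_hom trX x trY y f -> adapted_hom trY y trZ z g ->
  adapted_hom trX x trZ z (fun u => g (f u)).
Proof.
move=> [hf fx ftr] [hg gy gtr]; split; first exact: uah_comp.
  by move=> i; rewrite fx gy.
by move=> u; rewrite gtr ftr.
Qed.

Lemma adapted_trace_monomial (X Y : algType complex) (trX : X -> X) (x : I -> X)
    (trY : Y -> Y) (y : I -> Y) (f : X -> Y) (M0 : seq I) (Ms : seq (seq I)) :
  adapted_hom trX x trY y f ->
  f (monomial x M0 * \prod_(M <- Ms) trX (monomial x M)) =
  monomial y M0 * \prod_(M <- Ms) trY (monomial y M).
Proof.
move=> [hf fx ftr]; rewrite (uahM hf) (uah_monomial hf _ fx) (uah_prod hf).
by congr (_ * _); apply: eq_bigr => M _; rewrite -ftr (uah_monomial hf _ fx).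
Qed.

Lemma universal_triples_isomorphic
    (X1 : algType complex) (tr1 : X1 -> X1) (x1 : I -> X1)
    (X2 : algType complex) (tr2 : X2 -> X2) (x2 : I -> X2) :
  center_valued_expectation tr1 -> universal_property tr1 x1 ->
  center_valued_expectation tr2 -> universal_property tr2 x2 ->
  exists! f : X1 -> X2, adapted_hom tr1 x1 tr2 x2 f /\ bijective f.
Proof.
move=> h1 U1 h2 U2.
have [f12 [a12 u12]] := U1 X2 tr2 h2 x2.
have [f21 [a21 _]] := U2 X1 tr1 h1 x1.
have [i1 [_ id1]] := U1 X1 tr1 h1 x1.
have [i2 [_ id2]] := U2 X2 tr2 h2 x2.
have e1 : (fun u => f21 (f12 u)) = (fun u => u).
  by rewrite -(id1 _ (adapted_comp a12 a21)) -(id1 _ (adapted_id tr1 x1)).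
have e2 : (fun u => f12 (f21 u)) = (fun u => u).
  by rewrite -(id2 _ (adapted_comp a21 a12)) -(id2 _ (adapted_id tr2 x2)).
exists f12; split; last by move=> f [af _]; exact: u12.
split=> //; exists f21 => u.
- exact: (congr1 (fun F => F u) e1).
- exact: (congr1 (fun F => F u) e2).
Qed.
End AdaptedHom.

Section Expectation.
Variables (A : algType complex) (tau : A -> A).
Hypothesis htau : center_valued_expectation tau.

Lemma tau_lin : linear tau. Proof. by case: htau. Qed.
Lemma tau_central u v : tau u * v = v * tau u. Proof. by case: htau. Qed.
Lemma tau_mul u v : tau (tau u * v) = tau u * tau v. Proof. by case: htau. Qed.
Lemma tau1 : tau 1 = 1. Proof. by case: htau. Qed.

Definition tau_scalar (z : A) : Prop :=
  (forall v, z * v = v * z) /\ (forall b, tau (b * z) = tau b * z).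

Lemma tau_scalar1 : tau_scalar 1.
Proof. by split=> [v|b]; rewrite ?mulr1 ?mul1r. Qed.

Lemma tau_scalarM z1 z2 : tau_scalar z1 -> tau_scalar z2 -> tau_scalar (z1 * z2).
Proof.
move=> [c1 t1] [c2 t2]; split=> [v|b]; first by rewrite -mulrA c2 mulrA c1 mulrA.
by rewrite mulrA t2 t1 mulrA.
Qed.

Lemma tau_scalar_tau u : tau_scalar (tau u).
Proof.
split=> [v|b]; first exact: tau_central.
by rewrite -tau_central tau_mul tau_central.
Qed.

Lemma tau_scalar_prod (T : Type) (r : seq T) (F : T -> A) :
  tau_scalar (\prod_(t <- r) tau (F t)).
Proof.
by apply: (big_ind tau_scalar tau_scalar1 tau_scalarM) => t _; exact: tau_scalar_tau.
Qed.
End Expectation.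

Section TraceMonomials.
Variables (I : Type) (X : algType complex) (tr : X -> X) (x : I -> X).
Hypothesis htr : center_valued_expectation tr.
Local Notation TM := (trace_monomials tr x).

Lemma trace_monomial1 : TM 1.
Proof. by exists [::], [::]; rewrite /monomial !big_nil mulr1. Qed.

Lemma trace_monomialX i : TM (x i).
Proof. by exists [:: i], [::]; rewrite /monomial big_cons !big_nil !mulr1. Qed.

Lemma trace_monomialM u v : TM u -> TM v -> TM (u * v).
Proof.
move=> [M0 [Ms ->]] [N0 [Ns ->]]; exists (M0 ++ N0), (Ms ++ Ns).
have [cN _] := tau_scalar_prod htr Ms (monomial x).
have -> : monomial x (M0 ++ N0) = monomial x M0 * monomial x N0.
  by rewrite /monomial big_cat.
by rewrite big_cat -!mulrA; congr (_ * _); rewrite mulrA cN -mulrA.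
Qed.

Lemma trace_monomial_tr u : TM u -> TM (tr u).
Proof.
move=> [M0 [Ms ->]]; exists [::], (M0 :: Ms).
have [_ tN] := tau_scalar_prod htr Ms (monomial x).
by rewrite tN /monomial big_nil mul1r big_cons.
Qed.
End TraceMonomials.

(* The commutative monoid of tau-scalars, as a type, so that iterated
   products over it can be reordered freely. *)
Section ScalarMonoid.
Variables (A : algType complex) (tau : A -> A).

Definition scalars : Type := {z : A | tau_scalar tau z}.

Definition scal1 : scalars := exist _ 1 (tau_scalar1 tau).
Definition scalM (z1 z2 : scalars) : scalars :=
  exist _ (sval z1 * sval z2) (tau_scalarM (svalP z1) (svalP z2)).

Lemma scalars_inj (z1 z2 : scalars) : sval z1 = sval z2 -> z1 = z2.
Proof.
case: z1 z2 => [z1 p1] [z2 p2] /= e; subst z2; congr exist; exact: proof_irrelevance.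
Qed.

Lemma scalMA : associative scalM.
Proof. by move=> z1 z2 z3; apply: scalars_inj; rewrite /= mulrA. Qed.
Lemma scalMC : commutative scalM.
Proof. by move=> z1 z2; apply: scalars_inj; rewrite /= (proj1 (svalP z1)). Qed.
Lemma scal1M : left_id scal1 scalM.
Proof. by move=> z; apply: scalars_inj; rewrite /= mul1r. Qed.
End ScalarMonoid.

HB.instance Definition _ (A : algType complex) (tau : A -> A) :=
  Monoid.isComLaw.Build (scalars tau) (scal1 tau) (@scalM A tau)
    (@scalMA A tau) (@scalMC A tau) (@scal1M A tau).

(* Keys are pairs (M, t) of a word M over I and a commutative
   monomial t in the formal traces tr(w) of nonempty words w = i :: s,
   recorded as (i, s); the key (M, t) stands for M t.  The index type is
   given classical decidable equality and choice, as monomials require. *)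
Definition idx (I : Type) : Type := I.
HB.instance Definition _ (I : Type) := hasDecEq.Build (idx I) (@classic_eqP I).
HB.instance Definition _ (I : Type) := hasChoice.Build (idx I)
  (@classic_find_correct I) (@classic_find_complete I) (@classic_find_ext I).

Definition tvar (I : Type) : choiceType := (idx I * seq (idx I))%type.
Definition key (I : Type) : monomType := mprod (fmonom (idx I)) (cmonom (tvar I)).
Definition model (I : Type) : algType complex := calg (key I).

Section Model.
Variable I : Type.
Implicit Types (k : key I) (g : model I).

Definition gen (i : I) : model I := bs ((FMonom [:: (i : idx I)], mone) : key I).

Definition trword (s : seq (idx I)) : cmonom (tvar I) :=
  if s is i :: s' then ucm ((i, s') : tvar I) else mone.

Definition trace_key k : model I := bs ((mone, mmul k.2 (trword k.1)) : key I).
Definition trm : model I -> model I := linext trace_key.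

Lemma trm_bs k : trm (bs k) = trace_key k.
Proof. exact: linextB. Qed.

(* Basis vectors of pure traces commute with everything, as T is commutative. *)
Lemma trace_part_central m g :
  bs ((mone, m) : key I) * g = g * bs ((mone, m) : key I).
Proof.
rewrite (calg_decomp g) mulr_sumr mulr_suml; apply: eq_bigr => k _.
by rewrite -scalerAr -scalerAl !bs_mul !mprod_mulE /= mul1m mulm1 [mmul m _]mulmC.
Qed.

Lemma trm_central g h : trm g * h = h * trm g.
Proof.
rewrite /trm /linext mulr_suml mulr_sumr; apply: eq_bigr => k _.
by rewrite -scalerAl -scalerAr trace_part_central.
Qed.

(* It suffices to check the module property on basis vectors, where it is
   associativity in T. *)
Lemma trm_mul g h : trm (trm g * h) = trm g * trm h.
Proof.
have hl : linear trm by exact: linext_lin.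
move: h; apply: (linear_basis_ext (lin_comp hl (lin_mull _))
  (lin_comp (lin_mull _) hl)) => l.
move: g; apply: (linear_basis_ext (lin_comp hl (lin_comp (lin_mulr _) hl))
  (lin_comp (lin_mulr _) hl)) => k.
rewrite !trm_bs /trace_key bs_mul trm_bs /trace_key bs_mul !mprod_mulE /=.
by rewrite !mul1m -mulmA.
Qed.

Lemma trm1 : trm 1 = 1.
Proof. by rewrite calg1E trm_bs /trace_key mprod_oneE /= fm1 /= mul1m. Qed.

Lemma trm_cve : center_valued_expectation trm.
Proof.
split; [exact: linext_lin | exact: trm_central | exact: trm_mul | exact: trm1].
Qed.
End Model.

Section ModelGeneration.
Variable I : Type.
Local Notation trm := (@trm I).
Local Notation gen := (@gen I).

Lemma monomial_gen (s : seq (idx I)) :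
  monomial gen s = bs ((FMonom s, mone) : key I).
Proof.
elim: s => [|i s IH]; first by rewrite /monomial big_nil calg1E mprod_oneE -fmoneE.
rewrite /monomial big_cons -/(monomial _ _) IH /gen bs_mul mprod_mulE /= mul1m.
by have -> : mmul (FMonom [:: i]) (FMonom s) = FMonom (i :: s) := fmmulE _ _.
Qed.

Lemma trm_monomial (i : idx I) (s : seq (idx I)) :
  trm (monomial gen (i :: s)) = bs ((mone, ucm ((i, s) : tvar I)) : key I).
Proof. by rewrite monomial_gen trm_bs /trace_key /= mul1m. Qed.

(* The model is generated by the X_i under products and trm: every basis
   vector M t is the product of the monomial M with traces of monomials. *)
Section Induction.
Variable P : model I -> Prop.
Hypotheses (P1 : P 1) (Pgen : forall i, P (gen i))
  (PM : forall g h, P g -> P h -> P (g * h)) (Ptr : forall g, P g -> P (trm g)).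

Lemma generated_monomial s : P (monomial gen s).
Proof.
elim: s => [|i s IH]; first by rewrite /monomial big_nil.
by rewrite /monomial big_cons; apply: PM; [exact: Pgen | exact: IH].
Qed.

(* By induction on the degree of t: t = tr(w) t' with t' of smaller degree,
   and tr(w) is the trace of the monomial w. *)
Lemma generated_traces (m : cmonom (tvar I)) : P (bs ((mone, m) : key I)).
Proof.
elim: {m}(mdeg m).+1 {-2}m (ltnSn (mdeg m)) => // n IH m lt.
have [->|nm] := eqVneq m mone; first by rewrite -mprod_oneE -calg1E.
have /fset0Pn [[i s] vin] : finsupp m != fset0.
  apply: contra nm => /eqP e; apply/cmP => v.
  have : v \notin finsupp m by rewrite e.
  by rewrite -cmE_eq0 cm1 => /eqP.
have mv : (0 < m (i, s))%N by rewrite lt0n cmE_eq0 negbK.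
have em : m = mmul (ucm ((i, s) : tvar I)) (divcm m (ucm ((i, s) : tvar I))).
  apply/eqP/cmP => v; rewrite cmM divcmE cmU.
  by case: eqP => [<-|_]; rewrite ?subn0 // addnC subnK.
have -> : bs ((mone, m) : key I) = bs ((mone, ucm ((i, s) : tvar I)) : key I)
    * bs ((mone, divcm m (ucm ((i, s) : tvar I))) : key I).
  by rewrite bs_mul mprod_mulE /= mul1m -em.
rewrite -trm_monomial.
apply: PM; first exact/Ptr/generated_monomial.
by apply: IH; move: lt; rewrite {1}em mdegM mdegU add1n ltnS.
Qed.

Lemma generated_basis k : P (bs k).
Proof.
case: k => s m; have -> : ((s, m) : key I) = mmul ((s, mone) : key I) ((mone, m) : key I).
  by rewrite mprod_mulE /= mulm1 mul1m.
rewrite -bs_mul; apply: PM; last exact: generated_traces.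
by rewrite -(fmK s) -monomial_gen; exact: generated_monomial.
Qed.
End Induction.
End ModelGeneration.

(* The universal map to (A, tau, a): M t is sent to a(M) times the product
   of the tau(a(w)) over the traces tr(w) occurring in t, computed in the
   commutative monoid of tau-scalars. *)
Section UniversalMap.
Variables (I : Type) (A : algType complex) (tau : A -> A).
Hypothesis htau : center_valued_expectation tau.
Variable a : I -> A.

Definition trace_scalar (w : seq I) : scalars tau :=
  exist _ (tau (monomial a w)) (tau_scalar_tau htau _).

Definition trace_value (m : cmonom (tvar I)) : scalars tau :=
  \big[@scalM A tau/scal1 tau]_(v <- finsupp m)
     \big[@scalM A tau/scal1 tau]_(j < m v) trace_scalar (v.1 :: v.2).

Lemma trace_valueEw (d : {fset tvar I}) (m : cmonom (tvar I)) :
  (finsupp m `<=` d)%fset -> trace_value m =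
  \big[@scalM A tau/scal1 tau]_(v <- d)
     \big[@scalM A tau/scal1 tau]_(j < m v) trace_scalar (v.1 :: v.2).
Proof.
move=> le; rewrite /trace_value (big_fset_incl _ le) // => v _ vn.
have -> : m v = 0%N by apply/eqP; rewrite cmE_eq0.
by rewrite big_ord0.
Qed.

Lemma trace_valueM (m1 m2 : cmonom (tvar I)) :
  trace_value (mmul m1 m2) = scalM (trace_value m1) (trace_value m2).
Proof.
have s1 : (finsupp m1 `<=` finsupp m1 `|` finsupp m2)%fset by exact: fsubsetUl.
have s2 : (finsupp m2 `<=` finsupp m1 `|` finsupp m2)%fset by exact: fsubsetUr.
rewrite (trace_valueEw s1) (trace_valueEw s2) /trace_value mdomD -big_split /=.
by apply: eq_bigr => v _; rewrite cmM big_split_ord.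
Qed.

Lemma trace_value1 : trace_value mone = scal1 tau.
Proof. by rewrite /trace_value mdom1 big_seq_fset0. Qed.

Lemma trace_value_trword (s : seq (idx I)) :
  sval (trace_value (trword s)) = tau (monomial a s).
Proof.
case: s => [|i s] /=; first by rewrite trace_value1 /monomial big_nil tau1.
by rewrite /trace_value mdomU big_seq_fset1 cmUU big_ord1.
Qed.

Definition key_value (k : key I) : A := monomial a k.1 * sval (trace_value k.2).

Lemma key_value1 : key_value mone = 1.
Proof. by rewrite /key_value mprod_oneE /= fm1 /monomial big_nil trace_value1 mulr1. Qed.

Lemma key_valueM k1 k2 : key_value (mmul k1 k2) = key_value k1 * key_value k2.
Proof.
rewrite /key_value mprod_mulE /= fmM /monomial big_cat trace_valueM /=.
have [c1 _] := svalP (trace_value k1.2).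
by rewrite -!mulrA; congr (_ * _); rewrite !mulrA c1.
Qed.

Definition univ_map : model I -> A := linext key_value.

Lemma univ_map_adapted : adapted_hom (@trm I) (@gen I) tau a univ_map.
Proof.
have hl := linext_lin key_value; split.
- exact: linext_hom key_value1 key_valueM.
- move=> i; rewrite /univ_map /gen linextB /key_value /= trace_value1.
  by rewrite /monomial big_cons big_nil /= !mulr1.
- apply: linear_basis_ext (lin_comp (tau_lin htau) hl) (lin_comp hl (linext_lin _)) _ => k.
  rewrite !linextB /key_value /= fm1 /monomial big_nil mul1r.
  have [c2 t2] := svalP (trace_value k.2).
  by rewrite trace_valueM /= trace_value_trword t2 c2.
Qed.
End UniversalMap.

Section ModelUniversal.
Variable I : Type.

(* An adapted map out of the model is determined by the images of the
   generators, since the model is generated by them under products and trm. *)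
Lemma adapted_from_model_unique (A : algType complex) (tau : A -> A) (a : I -> A)
    (h1 h2 : model I -> A) :
  adapted_hom (@trm I) (@gen I) tau a h1 -> adapted_hom (@trm I) (@gen I) tau a h2 ->
  h1 = h2.
Proof.
move=> [hh1 h1x h1tr] [hh2 h2x h2tr]; apply: functional_extensionality.
apply: (linear_basis_ext (uah_lin hh1) (uah_lin hh2)).
apply: (@generated_basis I (fun g => h1 g = h2 g)).
- by rewrite (uah1 hh1) (uah1 hh2).
- by move=> i; rewrite h1x h2x.
- by move=> g h e1 e2; rewrite (uahM hh1) (uahM hh2) e1 e2.
- by move=> g e; rewrite -h1tr -h2tr e.
Qed.

Lemma model_universal : universal_property (@trm I) (@gen I).
Proof.
move=> A tau htau a; exists (univ_map htau a); split; first exact: univ_map_adapted.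
by move=> h hh; apply: adapted_from_model_unique (univ_map_adapted htau a) hh.
Qed.

Lemma model_trace_monomials (z : model I) :
  trace_monomials (@trm I) (@gen I) z <-> exists k, z = bs k.
Proof.
split=> [[M0 [Ms ->]] | [k ->]].
  have [k ->] : exists k, \prod_(M <- Ms) trm (monomial (@gen I) M) = bs k.
    elim: Ms => [|M Ms [k IH]]; first by exists mone; rewrite big_nil calg1E.
    rewrite big_cons IH monomial_gen trm_bs /trace_key bs_mul; by eexists.
  rewrite monomial_gen bs_mul; by eexists.
apply: (@generated_basis I (trace_monomials (@trm I) (@gen I))).
- exact: trace_monomial1.
- exact: trace_monomialX.
- exact: trace_monomialM (@trm_cve I).
- exact: trace_monomial_tr (@trm_cve I).
Qed.

Lemma model_retraction (F : algType complex) (y : I -> F) :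
  exists p : model I -> F, unital_alg_hom p /\ forall i, p (gen i) = y i.
Proof.
pose H (k : key I) : F := if k.2 == mone then monomial y k.1 else 0.
have H1 : H mone = 1 by rewrite /H mprod_oneE /= eqxx fm1 /monomial big_nil.
have HM k1 k2 : H (mmul k1 k2) = H k1 * H k2.
  rewrite /H mprod_mulE /= cmM_eq1 fmM /monomial big_cat.
  by case: (k1.2 == mone); case: (k2.2 == mone); rewrite /= ?mul0r ?mulr0.
exists (linext H); split; first exact: linext_hom H1 HM.
by move=> i; rewrite /gen linextB /H /= eqxx /monomial big_cons big_nil mulr1.
Qed.
End ModelUniversal.

Section UniversalTriple.
Variables (I : Type) (X : algType complex) (tr : X -> X) (x : I -> X).
Hypotheses (htr : center_valued_expectation tr) (U : universal_property tr x).

(* The isomorphism with the model carries its basis onto the trace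
   monomials of X. *)
Lemma universal_basis : is_basis (trace_monomials tr x).
Proof.
have [phi [[aphi bphi] _]] :=
  universal_triples_isomorphic (@trm_cve I) (@model_universal I) htr U.
have [hphi _ _] := aphi.
apply: (image_basis (uah_lin hphi) bphi) => z; split.
  move=> [M0 [Ms ->]].
  have [k ek] := proj1 (model_trace_monomials
    (monomial (@gen I) M0 * \prod_(M <- Ms) trm (monomial (@gen I) M)))
    (ex_intro _ M0 (ex_intro _ Ms erefl)).
  by exists k; rewrite -ek (adapted_trace_monomial _ _ aphi).
move=> [k ->]; have [M0 [Ms ->]] := proj2 (model_trace_monomials (bs k)) (ex_intro _ k erefl).
by exists M0, Ms; rewrite (adapted_trace_monomial _ _ aphi).
Qed.

(* The free unital algebra embeds into X: the comparison map factors as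
   F -> model -> X, the second map is an isomorphism, and the first has a
   left inverse by model_retraction. *)
Lemma universal_free_injective (F : algType complex) (y : I -> F) (g : F -> X) :
  free_unital_algebra y -> unital_alg_hom g -> (forall i, g (y i) = x i) -> injective g.
Proof.
move=> hF hg gy.
have [phi [[[hphi phix _] bphi] _]] :=
  universal_triples_isomorphic (@trm_cve I) (@model_universal I) htr U.
have [e [[he ey] _]] := hF (model I) (@gen I).
have [p [hp py]] := model_retraction y.
have [g0 [_ gunique]] := hF X x.
have [i0 [_ idunique]] := hF F y.
have eg : g = (fun u => phi (e u)).
  rewrite -(gunique _ (conj hg gy)); apply: gunique; split.
    exact: uah_comp he hphi.
  by move=> i; rewrite ey phix.
have pe : (fun u => p (e u)) = (fun u => u).
  rewrite -(idunique _ (conj (uah_id F) (fun i => erefl))).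
  symmetry; apply: idunique; split; first exact: uah_comp he hp.
  by move=> i; rewrite ey py.
move=> u v; rewrite eg => /(bij_inj bphi) /(congr1 p) epe.
by have := congr1 (fun G => G u) pe; rewrite /= epe (congr1 (fun G => G v) pe).
Qed.
End UniversalTriple.

Theorem mainTheorem1 (I : Type) :
  (* existence of a triple with the universal property for I *)
  (exists (X : algType complex) (tr : X -> X) (x : I -> X),
      center_valued_expectation tr /\ universal_property tr x)
  /\
  (* uniqueness: any two such triples are related by a unique I-adapted isomorphism *)
  (forall (X1 : algType complex) (tr1 : X1 -> X1) (x1 : I -> X1)
          (X2 : algType complex) (tr2 : X2 -> X2) (x2 : I -> X2),
      center_valued_expectation tr1 -> universal_property tr1 x1 ->
      center_valued_expectation tr2 -> universal_property tr2 x2 ->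
      exists! f : X1 -> X2, adapted_hom tr1 x1 tr2 x2 f /\ bijective f)
  /\
  (* structure of any such triple (X, tr, x) *)
  (forall (X : algType complex) (tr : X -> X) (x : I -> X),
      center_valued_expectation tr -> universal_property tr x ->
      (* the unital homomorphism C<X_i : i in I> -> X, X_i |-> X_i, is injective *)
      (forall (F : algType complex) (y : I -> F) (g : F -> X),
          free_unital_algebra y -> unital_alg_hom g ->
          (forall i, g (y i) = x i) -> injective g)
      /\
      (* { M0 tr(M1) ... tr(Mn) } is a basis of X *)
      is_basis (trace_monomials tr x)).
Proof.
split; first by exists (model I), (@trm I), (@gen I); split;
  [exact: trm_cve | exact: model_universal].
split; first exact: universal_triples_isomorphic.
move=> X tr x htr U; split; first exact: universal_free_injective htr U.
exact: universal_basis htr U.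
Qed.
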